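(* Let $N_e\ge2$, $L\ge1$ be integers, $\sigma_r>0$, $c_4\in\mathbb{C}\setminus\{0\}$, $d>0$. For $\phi\in(-\pi/2,\pi/2)$ let $$\mathbf{C}(\phi)=|c_4|^2L\,\mathbf{I}_L\otimes\big(d\,\mathbf{c}(\phi)\mathbf{c}(\phi)^H\big)+\sigma_r^2\mathbf{I}_{N_eL},$$ $F_{\phi\phi}=\mathrm{tr}\!\big(\mathbf{C}^{-1}\frac{\partial\mathbf{C}}{\partial\phi}\mathbf{C}^{-1}\frac{\partial\mathbf{C}}{\partial\phi}\big)$ and $\mathrm{CRB}(\phi)=1/F_{\phi\phi}$. Then $$\mathrm{CRB}(\phi)=\frac{6\sigma_r^2(\sigma_r^2+|c_4|^2LdN_e)}{|c_4|^4L^3d^2\pi^2\cos^2(\phi)N_e^2(N_e^2-1)}.$$ Moreover, if $\phi\sim\mathcal{U}(-\pi/2,\pi/2)$ then for $\epsilon>0$, with $u(\epsilon)=\sqrt6\,\sigma_r\big(\epsilon|c_4|^4L^3d^2\pi^2N_e^2(N_e^2-1)\big)^{-1/2}(\sigma_r^2+|c_4|^2LdN_e)^{1/2}$, we have $P(\mathrm{CRB}(\phi)>\epsilon)=\frac2\pi\sin^{-1}(u(\epsilon))$ if $u(\epsilon)<1$, and $=1$ otherwise.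
   Context: $j=\sqrt{-1}$. $\mathbf{c}(\phi)\in\mathbb{C}^{N_e}$ has $i$-th entry $e^{-j\pi\sin(\phi)\frac{N_e-(2i-1)}{2}}$. This models a weak sensing eavesdropper (not knowing the transmitted signal) under the SSJB scheme: its vectorized observation is zero-mean complex Gaussian with covariance $\mathbf{C}(\phi)$, where in the paper $d=P\tau|\alpha|^2N$ ($P>0$ transmit power, $\tau\in(0,1)$ data power fraction, $\alpha$ the coefficient of the data beam along the normalized target steering vector, $N$ the number of BS transmit antennas); $\mathrm{CRB}(\phi)$ is the inverse Fisher information for $\phi$. *)

From HB Require Import structures.
From mathcomp Require Import all_boot all_order all_algebra.
From mathcomp Require Import all_classical all_reals all_analysis.
From mathcomp Require Import complex mxtens.

Set Implicit Arguments.
Unset Strict Implicit.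
Unset Printing Implicit Defensive.

Import Order.TTheory GRing.Theory Num.Theory.
Local Open Scope ring_scope.
Local Open Scope complex_scope.

Section Defs.
Variable R : realType.

Definition expj (theta : R) : R[i] := cos theta +i* sin theta.

(* steering vector c(phi) in C^{Ne}: the (1-indexed) k-th entry is
   exp(-j pi sin(phi) (Ne - (2k-1))/2); here k = i + 1 for i : 'I_Ne. *)
Definition steer (Ne : nat) (phi : R) : 'cV[R[i]]_Ne :=
  \col_(i < Ne) expj (- (pi * sin phi * (Ne%:R - (2 * (i%:R + 1) - 1)) / 2)).

Definition modc (z : R[i]) : R :=
  Num.sqrt (complex.Re z ^+ 2 + complex.Im z ^+ 2).

Definition herm (m n : nat) (A : 'M[R[i]]_(m, n)) : 'M[R[i]]_(n, m) :=
  (map_mx (fun z : R[i] => z^*) A)^T.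

Definition cderive (f : R -> R[i]) (x : R) : R[i] :=
  (derive1 (fun t => complex.Re (f t)) x) +i* (derive1 (fun t => complex.Im (f t)) x).

Definition mderive (m n : nat) (M : R -> 'M[R[i]]_(m, n)) (x : R)
  : 'M[R[i]]_(m, n) :=
  \matrix_(i, j) cderive (fun t => M t i j) x.

Definition Cmat (Ne L : nat) (sigma : R) (c4 : R[i]) (d : R) (phi : R)
  : 'M[R[i]]_(L * Ne) :=
  (`|c4| ^+ 2 * L%:R) *: ((1%:M : 'M[R[i]]_L) *t
       ((d%:C) *: (steer Ne phi *m herm (steer Ne phi))))
  + (sigma ^+ 2)%:C *: 1%:M.

Definition Fisher (Ne L : nat) (sigma : R) (c4 : R[i]) (d : R) (phi : R)
  : R[i] :=
  let C := Cmat Ne L sigma c4 d phi in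
  let dC := mderive (Cmat Ne L sigma c4 d) phi in
  \tr (invmx C *m dC *m invmx C *m dC).

Definition CRB (Ne L : nat) (sigma : R) (c4 : R[i]) (d : R) (phi : R)
  : R[i] := (Fisher Ne L sigma c4 d phi)^-1.

Lemma mpi2_lt_pi2 : - (pi / 2) < pi / 2 :> R.
Proof.
have h : 0 < pi / 2 :> R by rewrite divr_gt0 // pi_gt0.
by rewrite (lt_trans _ h) // oppr_lt0.
Qed.

End Defs.

(* C(phi) = beta (I_L (x) c c^H) + sigma^2 I is, block by block, a
   rank-one perturbation of a scalar matrix, so Sherman-Morrison inverts it.
   With the antenna positions centred, c^H c = Ne, c^H c' = 0 and
   c'^H c' = pi^2 cos^2 phi Ne (Ne^2 - 1) / 12 for c' = dc/dphi, and the trace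
   tr (C^-1 C' C^-1 C') collapses to
   2 L beta^2 Ne c'^H c' / (sigma^2 (sigma^2 + beta Ne)), i.e.
   CRB(phi) = 1 / (K cos^2 phi) with K the Fisher information at phi = 0.
   Hence CRB(phi) > eps iff 0 < cos phi < u with u^2 = 1 / (eps K); on
   [-pi/2, pi/2] this is acos u < |phi| < pi/2 when u <= 1, of probability
   2 (pi/2 - acos u) / pi = 2 asin u / pi. *)

From HB Require Import structures.
From mathcomp Require Import all_boot all_order all_algebra.
From mathcomp Require Import all_classical all_reals all_analysis.
From mathcomp Require Import complex mxtens.
From mathcomp Require Import ring lra.

Set Implicit Arguments.
Unset Strict Implicit.
Unset Printing Implicit Defensive.

Import Order.TTheory GRing.Theory Num.Theory.
Local Open Scope ring_scope.
Local Open Scope complex_scope.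

Section Kronecker.
Variable R : comPzRingType.

Lemma tensmxBr m n p q (A : 'M[R]_(m, n)) (B1 B2 : 'M[R]_(p, q)) :
  A *t (B1 - B2) = A *t B1 - A *t B2.
Proof. by apply/matrixP => i j; rewrite !mxE mulrBr. Qed.

Lemma tensmxZr m n p q (A : 'M[R]_(m, n)) (k : R) (B : 'M[R]_(p, q)) :
  A *t (k *: B) = k *: (A *t B).
Proof. by apply/matrixP => i j; rewrite !mxE mulrCA. Qed.

Lemma tensmx1 m n : (1%:M : 'M[R]_m) *t (1%:M : 'M[R]_n) = 1%:M.
Proof.
apply/matrixP => i j.
case: (mxtens_indexP i) => i1 i2; case: (mxtens_indexP j) => j1 j2.
rewrite tensmxE !mxE (inj_eq (can_inj (@mxtens_indexK m n))) xpair_eqE.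
by case: (i1 == j1); case: (i2 == j2); rewrite ?mulr1 ?mulr0 ?mul0r.
Qed.

Lemma mxtrace_tens m n (A : 'M[R]_m) (B : 'M[R]_n) :
  \tr (A *t B) = \tr A * \tr B.
Proof.
rewrite /mxtrace (reindex (@mxtens_index m n)) /=; last first.
  by exists (@mxtens_unindex m n) => x _; rewrite ?mxtens_indexK ?mxtens_unindexK.
rewrite (eq_bigr (fun p => A p.1 p.1 * B p.2 p.2)); last by move=> [i j] _; rewrite tensmxE.
rewrite -(pair_big predT predT (fun i j => A i i * B j j)) mulr_suml.
by under [RHS]eq_bigr do rewrite mulr_sumr.
Qed.

End Kronecker.

Section RankOnePerturbation.
Variable F : fieldType.
Variables (L n : nat) (c c' : 'cV[F]_n) (r r' : 'rV[F]_n) (nc nc' be s : F).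
Hypotheses (rc : r *m c = nc%:M) (rc' : r *m c' = 0) (r'c : r' *m c = 0)
  (r'c' : r' *m c' = nc'%:M) (s_neq0 : s != 0) (sbe_neq0 : s + be * nc != 0).

Let P := c *m r.
Let C : 'M[F]_(L * n) := be *: ((1%:M : 'M[F]_L) *t P) + s *: 1%:M.
Let dC : 'M[F]_(L * n) := be *: ((1%:M : 'M[F]_L) *t (c' *m r + c *m r')).
Let ga := be / (s + be * nc).

(* Sherman-Morrison in each diagonal block, since [P *m P = nc *: P]. *)
Lemma invmx_rank1_perturbation :
  invmx C = s^-1 *: ((1%:M : 'M[F]_L) *t (1%:M - ga *: P)).
Proof.
have PP : P *m P = nc *: P by rewrite mulmxA -(mulmxA c) rc mul_mx_scalar scalemxAl.
set Ci := _ *: _.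
suff CiC : Ci *m C = 1%:M.
  have [_ uC] := mulmx1_unit CiC.
  by rewrite -[RHS]mulmx1 -(mulmxV uC) mulmxA CiC mul1mx.
rewrite /Ci /C tensmxBr tensmxZr tensmx1 -scalemxAl mulmxDr mulmxBl.
rewrite -!scalemxAr -!scalemxAl mul1mx mulmx1 tensmx_mul mul1mx PP tensmxZr /ga.
move: ((1%:M : 'M[F]_L) *t P) => Q; apply/matrixP => i j; rewrite !mxE.
by field; rewrite s_neq0 sbe_neq0.
Qed.

Lemma mxtrace_rank1_perturbation :
  \tr (invmx C *m dC *m invmx C *m dC) = 2 * L%:R * be ^+ 2 * nc * nc' / (s * (s + be * nc)).
Proof.
have MdC : (1%:M - ga *: P) *m (c' *m r + c *m r') = c' *m r + (1 - ga * nc) *: (c *m r').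
  rewrite mulmxBl mul1mx -scalemxAl !mulmxDr !mulmxA -!(mulmxA c) rc rc' mul0mx.
  by rewrite mulmx0 add0r mul_scalar_mx -scalemxAr scalerA scalerBl scale1r addrA.
have tr_cr'c'r : \tr (c *m r' *m (c' *m r)) = nc * nc'.
  by rewrite mulmxA -(mulmxA c) r'c' mul_mx_scalar -scalemxAl mxtraceZ mxtrace_mulC rc
    mxtrace_scalar mulr1n mulrC.
have tr_c'rcr' : \tr (c' *m r *m (c *m r')) = nc * nc'.
  by rewrite mxtrace_mulC tr_cr'c'r.
rewrite invmx_rank1_perturbation /dC; do 4 rewrite -?scalemxAl -?scalemxAr ?scalerA.
rewrite !tensmx_mul !mul1mx mxtraceZ mxtrace_tens mxtrace1 -mulmxA MdC.
have c'rc'r : c' *m r *m (c' *m r) = 0 by rewrite mulmxA -(mulmxA c') rc' mulmx0 mul0mx.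
have cr'cr' : c *m r' *m (c *m r') = 0 by rewrite mulmxA -(mulmxA c) r'c mulmx0 mul0mx.
rewrite !mulmxDl !mulmxDr -!scalemxAl -!scalemxAr c'rc'r cr'cr'.
rewrite !scaler0 add0r addr0 !mxtraceD !mxtraceZ tr_cr'c'r tr_c'rcr' /ga.
by field; rewrite s_neq0 sbe_neq0.
Qed.

End RankOnePerturbation.

Section AntennaPositions.
Variable R : numFieldType.

(* Position of the k-th of N antennas relative to the array centre, in
   half-wavelengths. *)
Definition antenna_pos (N k : nat) : R := (N%:R - (2 * k%:R + 1)) / 2.

Lemma antenna_posS N (k : 'I_N) :
  antenna_pos N.+1 (widen_ord (leqnSn N) k) = antenna_pos N k + 2^-1.
Proof. by rewrite /antenna_pos /= -natr1; field. Qed.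

Lemma sum_antenna_pos N : \sum_(k < N) antenna_pos N k = 0.
Proof.
elim: N => [|N IH]; first by rewrite big_ord0.
rewrite big_ord_recr /=; under eq_bigr do rewrite antenna_posS.
by rewrite big_split /= IH sumr_const card_ord /antenna_pos -natr1; field.
Qed.

Lemma sum_antenna_pos_sqr N :
  \sum_(k < N) antenna_pos N k ^+ 2 = N%:R * (N%:R ^+ 2 - 1) / 12.
Proof.
elim: N => [|N IH]; first by rewrite big_ord0 mul0r mul0r.
rewrite big_ord_recr /=; under eq_bigr do rewrite antenna_posS sqrrD.
rewrite !big_split /= IH -big_distrr -big_distrl /= sum_antenna_pos sumr_const card_ord.
by rewrite /antenna_pos -natr1; field.
Qed.

End AntennaPositions.

Section SteeringVector.
Variable R : realType.

Lemma expjD (a b : R) : expj a * expj b = expj (a + b).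
Proof.
rewrite /expj cosD sinD; apply/eqP; rewrite eq_complex /=.
by apply/andP; split; apply/eqP; ring.
Qed.

Lemma conj_expj (a : R) : conjc (expj a) = expj (- a).
Proof. by rewrite /expj /= cosN sinN. Qed.

Lemma mul_conj_expj (a : R) : conjc (expj a) * expj a = 1.
Proof. by rewrite conj_expj expjD addNr /expj cos0 sin0. Qed.

(* [rmorphM] would leave the bundled morphism in place of [conjc]. *)
Lemma conjcM (x y : R[i]) : conjc (x * y) = conjc x * conjc y.
Proof. exact: (conjc_is_multiplicative R).1. Qed.

Lemma conjc_iR (y : R) : conjc ('i%C * y%:C) = - ('i%C * y%:C).
Proof. by apply/eqP; rewrite eq_complex /=; apply/andP; split; apply/eqP; ring. Qed.

Lemma sqr_iR (y : R) : ('i%C * y%:C) ^+ 2 = - (y ^+ 2)%:C.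
Proof. by apply/eqP; rewrite eq_complex /=; apply/andP; split; apply/eqP; ring. Qed.

Lemma cderive_expj (K1 K2 : R[i]) {g : R -> R} {x g' : R} :
  is_derive x 1 g g' ->
  cderive (fun t => K1 * expj (g t) + K2) x = K1 * ('i%C * g'%:C * expj (g x)).
Proof.
move=> dg.
have dcos : is_derive x 1 (cos \o g) (- sin (g x) * g').
  exact: is_derive1_comp (is_derive_cos _) dg.
have dsin : is_derive x 1 (sin \o g) (cos (g x) * g').
  exact: is_derive1_comp (is_derive_sin _) dg.
case: K1 K2 => [a b] [a2 b2]; rewrite /cderive /expj /= !derive1E.
have dRe : is_derive x 1 (fun t => a * cos (g t) - b * sin (g t) + a2)
   (a * (- sin (g x) * g') - b * (cos (g x) * g') + 0) by apply: is_deriveD.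
have dIm : is_derive x 1 (fun t => a * sin (g t) + b * cos (g t) + b2)
   (a * (cos (g x) * g') + b * (- sin (g x) * g') + 0) by apply: is_deriveD.
rewrite !derive_val; apply/eqP; rewrite eq_complex /=.
by apply/andP; split; apply/eqP; ring.
Qed.

Definition steer_phase (N k : nat) : R := - (pi * antenna_pos R N k).

Lemma sum_steer_phase N : \sum_(k < N) steer_phase N k = 0.
Proof. by rewrite sumrN -mulr_sumr sum_antenna_pos mulr0 oppr0. Qed.

Lemma sum_steer_phase_sqr N :
  \sum_(k < N) steer_phase N k ^+ 2 = pi ^+ 2 * (N%:R * (N%:R ^+ 2 - 1) / 12).
Proof.
under eq_bigr do rewrite sqrrN exprMn.
by rewrite -mulr_sumr sum_antenna_pos_sqr.
Qed.

Lemma steer_angleE N k phi :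
  - (pi * sin phi * (N%:R - (2 * (k%:R + 1) - 1)) / 2) = steer_phase N k * sin phi.
Proof. by rewrite /steer_phase /antenna_pos; ring. Qed.

Definition dsteer N phi : 'cV[R[i]]_N :=
  \col_k ('i%C * (steer_phase N k * cos phi)%:C * steer N phi k 0).

Lemma steer_gram N phi : herm (steer N phi) *m steer N phi = (N%:R : R[i])%:M.
Proof.
apply/matrixP => i j; rewrite !ord1 !mxE eqxx mulr1n.
under eq_bigr do rewrite /herm !mxE steer_angleE mul_conj_expj.
by rewrite sumr_const card_ord.
Qed.

Lemma steer_dsteer_gram N phi : herm (steer N phi) *m dsteer N phi = 0.
Proof.
apply/matrixP => i j; rewrite !ord1 !mxE.
under eq_bigr => k _.
  rewrite /herm !mxE steer_angleE mulrCA mul_conj_expj mulr1.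
  over.
by rewrite -big_distrr -rmorph_sum -big_distrl /= sum_steer_phase mul0r mulr0.
Qed.

Lemma dsteer_steer_gram N phi : herm (dsteer N phi) *m steer N phi = 0.
Proof.
apply/matrixP => i j; rewrite !ord1 !mxE.
under eq_bigr => k _.
  rewrite /herm !mxE steer_angleE conjcM conjc_iR -mulrA mul_conj_expj mulr1.
  over.
by rewrite sumrN -big_distrr -rmorph_sum -big_distrl /= sum_steer_phase mul0r mulr0 oppr0.
Qed.

Lemma dsteer_gram N phi : herm (dsteer N phi) *m dsteer N phi
  = ((cos phi ^+ 2 * pi ^+ 2 * (N%:R * (N%:R ^+ 2 - 1) / 12))%:C)%:M.
Proof.
apply/matrixP => i j; rewrite !ord1 !mxE eqxx mulr1n.
under eq_bigr => k _.
  rewrite /herm !mxE steer_angleE conjcM conjc_iR mulrACA mul_conj_expj mulr1 mulNr.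
  rewrite -expr2 sqr_iR opprK exprMn mulrC.
  over.
by rewrite -rmorph_sum -mulr_sumr sum_steer_phase_sqr mulrA.
Qed.

Lemma mderive_Cmat Ne L sigma (c4 : R[i]) d phi :
  mderive (Cmat Ne L sigma c4 d) phi =
  (`|c4| ^+ 2 * L%:R * d%:C) *: ((1%:M : 'M[R[i]]_L) *t
     (dsteer Ne phi *m herm (steer Ne phi) + steer Ne phi *m herm (dsteer Ne phi))).
Proof.
apply/matrixP => i j; rewrite [LHS]mxE.
case: (mxtens_indexP i) => i1 i2; case: (mxtens_indexP j) => j1 j2.
set w := steer_phase Ne i2 - steer_phase Ne j2.
set K1 := `|c4| ^+ 2 * L%:R * ((i1 == j1)%:R * d%:C).
set K2 := (sigma ^+ 2)%:C * (mxtens_index (i1, i2) == mxtens_index (j1, j2))%:R.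
have -> : (fun t => Cmat Ne L sigma c4 d t (mxtens_index (i1, i2)) (mxtens_index (j1, j2)))
    = (fun t => K1 * expj (w * sin t) + K2).
  apply: funext => t; rewrite /Cmat !mxE !mxtens_indexK /= big_ord1 /herm !mxE.
  by rewrite !steer_angleE conj_expj expjD /K1 /K2 /w !mulrA mulrBl.
have dw : is_derive phi 1 (fun t => w * sin t) (w * cos phi) := is_deriveZ w (is_derive_sin phi).
rewrite (cderive_expj K1 K2 dw) /K1 !mxE !mxtens_indexK /= !big_ord1 /dsteer /herm !mxE.
have expj_w : expj (w * sin phi)
    = expj (steer_phase Ne i2 * sin phi) * conjc (expj (steer_phase Ne j2 * sin phi)).
  by rewrite conj_expj expjD /w mulrBl.
have realc_w : (w * cos phi)%:C
    = (steer_phase Ne i2 * cos phi)%:C - (steer_phase Ne j2 * cos phi)%:C :> R[i].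
  by rewrite /w mulrBl; exact: rmorphB.
rewrite expj_w realc_w !steer_angleE conjcM conjc_iR; ring.
Qed.

End SteeringVector.

Section FisherInformation.
Variable R : realType.

Definition Fisher_peak (Ne L : nat) (sigma : R) (c4 : R[i]) (d : R) : R :=
  (modc c4 ^+ 4 * L%:R ^+ 3 * d ^+ 2 * pi ^+ 2 * Ne%:R ^+ 2 * (Ne%:R ^+ 2 - 1))
  / (6 * sigma ^+ 2 * (sigma ^+ 2 + modc c4 ^+ 2 * L%:R * d * Ne%:R)).

Lemma normc_modc (z : R[i]) : `|z| = (modc z)%:C.
Proof. by case: z. Qed.

Lemma Fisher_val Ne L sigma (c4 : R[i]) d phi : sigma != 0 -> 0 <= d ->
  Fisher Ne L sigma c4 d phi = (Fisher_peak Ne L sigma c4 d * cos phi ^+ 2)%:C.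
Proof.
move=> sigma_neq0 d_ge0.
set G := sigma ^+ 2 + modc c4 ^+ 2 * L%:R * d * Ne%:R.
have Gc_neq0 : G%:C != 0 :> R[i].
  rewrite fmorph_eq0 lt0r_neq0 // ltr_pwDl ?exprn_even_gt0 ?sigma_neq0 ?orbT //.
  by rewrite !mulr_ge0 ?ler0n ?sqrtr_ge0.
have sigma2_neq0 : (sigma ^+ 2)%:C != 0 :> R[i] by rewrite fmorph_eq0 sqrf_eq0.
have sigma2_G_neq0 : (sigma ^+ 2)%:C + `|c4| ^+ 2 * L%:R * d%:C * Ne%:R != 0 :> R[i].
  by rewrite (_ : _ + _ = G%:C) // normc_modc /G; ring.
rewrite /Fisher mderive_Cmat /Cmat tensmxZr scalerA.
rewrite (mxtrace_rank1_perturbation L (steer_gram _ _) (steer_dsteer_gram _ _)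
  (dsteer_steer_gram _ _) (dsteer_gram _ _) sigma2_neq0 sigma2_G_neq0).
rewrite normc_modc /Fisher_peak; field.
by rewrite fmorph_eq0 sigma_neq0 andbT (_ : _ + _ = G%:C) // /G; ring.
Qed.

End FisherInformation.

Section UniformAngle.
Variable R : realType.
Local Open Scope classical_set_scope.
Local Notation mu := (@lebesgue_measure R).

Lemma eq_uniform_prob (a b : R) (ab : a < b) (A B : set R) :
  (forall x, a <= x <= b -> A x <-> B x) -> uniform_prob ab A = uniform_prob ab B.
Proof.
move=> AB; rewrite /uniform_prob integral_uniform_pdf [RHS]integral_uniform_pdf.
congr (integral _ _ _); apply/seteqP; split=> x [Ax xab]; split=> //;
  by apply/(AB x) => //; move: xab; rewrite /= in_itv.
Qed.

Lemma uniform_prob_sub (a b : R) (ab : a < b) (A : set R) :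
  measurable A -> A `<=` `[a, b] -> uniform_prob ab A = (((b - a)^-1)%:E * mu A)%E.
Proof.
move=> mA Aab; rewrite /uniform_prob integral_uniform_pdf setIidl //.
rewrite (eq_integral (fun _ => ((b - a)^-1)%:E)) ?integral_cst //.
by move=> x /[!inE] /Aab; rewrite /uniform_pdf /= in_itv /= => ->.
Qed.

Lemma cos_gt0_pihalfE (phi : R) : -(pi/2) <= phi <= pi/2 ->
  (0 < cos phi) = (-(pi/2) < phi < pi/2).
Proof.
move=> /andP[phi_ge phi_le]; apply/idP/idP=> [cos_gt0|]; last exact: cos_gt0_pihalf.
have [phiE|phi_neq] := eqVneq phi (pi/2); first by rewrite phiE cos_pihalf ltxx in cos_gt0.
have [phiE|phi_neqN] := eqVneq phi (-(pi/2)).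
  by rewrite phiE cosN cos_pihalf ltxx in cos_gt0.
by rewrite !lt_neqAle phi_ge phi_le phi_neq eq_sym phi_neqN.
Qed.

Lemma acos_lt_pihalf (u : R) : 0 < u <= 1 -> acos u < pi/2.
Proof.
move=> /andP[u_gt0 u_le1]; have pi_gt0 := pi_gt0 R.
have u_itv : -1 <= u <= 1 by apply/andP; split => //; lra.
have [/andP[acos_ge0 acos_le] cos_acos] := acos_def u_itv.
rewrite -ltr_cos ?cos_pihalf ?cos_acos // in_itv /=; apply/andP; split; lra.
Qed.

Lemma asin_acos (u : R) : -1 <= u <= 1 -> asin u = pi/2 - acos u.
Proof.
move=> u_itv; have [/andP[acos_ge0 acos_le] cos_acos] := acos_def u_itv.
have sin_eq : sin (pi/2 - acos u) = u.
  by rewrite sinB sin_pihalf cos_pihalf cos_acos; ring.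
by rewrite -{1}sin_eq sinK // in_itv /=; apply/andP; split; lra.
Qed.

Lemma cos_ltE (u phi : R) : 0 < u <= 1 -> -(pi/2) <= phi <= pi/2 ->
  (0 < cos phi < u) = ((-(pi/2) < phi < - acos u) || (acos u < phi < pi/2)).
Proof.
move=> u_itv phi_itv; have pi_gt0 := pi_gt0 R.
have acos_lt := acos_lt_pihalf u_itv.
have [/andP[acos_ge0 _] cos_acos] : 0 <= acos u <= pi /\ cos (acos u) = u.
  by apply: acos_def; case/andP: u_itv => u_gt0 u_le1; apply/andP; split; lra.
have cos_lt : (cos phi < u) = (acos u < `|phi|).
  rewrite -cos_norm -{1}cos_acos ltr_cos // !in_itv /= ?normr_ge0 ?acos_ge0 //=.
  - lra.
  - by rewrite ler_norml; case/andP: phi_itv => ? ?; apply/andP; split; lra.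
rewrite cos_gt0_pihalfE // cos_lt; case/andP: phi_itv => phi_ge phi_le.
have [phi_ge0|phi_lt0] := lerP 0 phi; [rewrite ger0_norm // | rewrite ltr0_norm //].
- apply/idP/idP => [/andP[/andP[_ ->] ->]|/orP[/andP[? ?]|/andP[-> ->]]]; rewrite ?orbT //.
  + lra.
  + by rewrite andbT; apply/andP; split; lra.
- apply/idP/idP => [/andP[/andP[-> _] ?]|/orP[/andP[-> ?]|/andP[? ?]]].
  + by apply/orP; left; lra.
  + by apply/andP; split; lra.
  + lra.
Qed.

Lemma uniform_prob_cos_lt (u : R) : 0 < u ->
  uniform_prob (@mpi2_lt_pi2 R) [set phi | 0 < cos phi < u]
  = (if u < 1 then 2 / pi * asin u else 1)%:E.
Proof.
move=> u_gt0; have pi_gt0 := pi_gt0 R.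
have [u_le1|u_gt1] := leP u 1.
- have u_itv : 0 < u <= 1 by rewrite u_gt0.
  have acos_lt := acos_lt_pihalf u_itv.
  have acos_ge0 : 0 <= acos u by apply: acos_ge0; apply/andP; split; lra.
  rewrite (eq_uniform_prob _ (B := `](-(pi/2)), (- acos u)[ `|` `](acos u), (pi/2)[)); last first.
    by move=> phi phi_itv; rewrite /= cos_ltE // !in_itv /=; split => /orP.
  rewrite uniform_prob_sub; first last.
  + by move=> x [] /=; rewrite !in_itv /= => /andP[? ?]; apply/andP; split; lra.
  + by apply: measurableU; exact: measurable_itv.
  rewrite measureU; first last.
  + by apply/seteqP; split => x //=; rewrite !in_itv /= => -[/andP[? ?] /andP[? ?]]; lra.
  + exact: measurable_itv.
  + exact: measurable_itv.
  have acos_gt : -(pi/2) < - acos u by lra.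
  rewrite /= !lebesgue_measure_itv /= (ifT _ _ acos_gt) (ifT _ _ acos_lt).
  rewrite -!EFinD -EFinM; congr EFin.
  have [u_lt1|u_ge1] := ltP u 1.
    rewrite asin_acos; last by apply/andP; split; lra.
    (* [field] would unfold [pi]. *)
    set p := pi in pi_gt0 *; clearbody p.
    by field; rewrite gt_eqF // gt_eqF //; lra.
  have u1 : u = 1 by apply/le_anti/andP.
  rewrite u1 acos1; set p := pi in pi_gt0 *; clearbody p.
  by field; rewrite gt_eqF //; lra.
- rewrite (eq_uniform_prob _ (B := `](-(pi/2)), (pi/2)[)); last first.
    move=> phi phi_itv; rewrite /= in_itv /= -cos_gt0_pihalfE //.
    by rewrite (le_lt_trans (cos_le1 phi) u_gt1) andbT.
  rewrite uniform_prob_sub ?lebesgue_measure_itv /=; first last.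
  + by move=> x /=; rewrite !in_itv /= => /andP[? ?]; apply/andP; split; lra.
  + exact: measurable_itv.
  rewrite (ifT _ _ (mpi2_lt_pi2 R)) -EFinD -EFinM (ifF _ _ (lt_gtF u_gt1)).
  congr EFin; set p := pi in pi_gt0 *; clearbody p.
  by field; rewrite gt_eqF //; lra.
Qed.

End UniformAngle.

Lemma ltr_inv_mul_sqr (F : realFieldType) (e k u x : F) :
  0 < e -> 0 < k -> 0 < u -> u ^+ 2 = (e * k)^-1 -> 0 <= x ->
  (e < (k * x ^+ 2)^-1) = (0 < x < u).
Proof.
move=> e_gt0 k_gt0 u_gt0 u2E; rewrite le_eqVlt => /orP[/eqP<-|x_gt0].
  (* both sides are false, as [0^-1 = 0] *)
  by rewrite expr0n mulr0 invr0 ltxx lt_gtF.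
rewrite x_gt0 -[x < u](ltr_pXn2r (_ : 0 < 2)%N) ?nnegrE ?ltW // u2E.
rewrite -[(k * _)^-1]div1r -[(e * k)^-1]div1r !ltr_pdivlMr ?mulr_gt0 ?exprn_gt0 //.
by rewrite mulrA mulrC.
Qed.

Theorem lemma6 (R : realType) (Ne L : nat) (sigma : R) (c4 : R[i]) (d : R)
  (hNe : (2 <= Ne)%N) (hL : (1 <= L)%N) (hsigma : 0 < sigma)
  (hc4 : c4 != 0) (hd : 0 < d) :
  (forall phi : R, - (pi / 2) < phi < pi / 2 ->
     CRB Ne L sigma c4 d phi =
     ((6 * sigma ^+ 2 * (sigma ^+ 2 + modc c4 ^+ 2 * L%:R * d * Ne%:R))
      / (modc c4 ^+ 4 * L%:R ^+ 3 * d ^+ 2 * pi ^+ 2 * cos phi ^+ 2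
         * Ne%:R ^+ 2 * (Ne%:R ^+ 2 - 1)))%:C)
  /\
  (forall eps : R, 0 < eps ->
     let u := Num.sqrt 6 * sigma
              * (Num.sqrt (eps * modc c4 ^+ 4 * L%:R ^+ 3 * d ^+ 2 * pi ^+ 2
                            * Ne%:R ^+ 2 * (Ne%:R ^+ 2 - 1)))^-1
              * Num.sqrt (sigma ^+ 2 + modc c4 ^+ 2 * L%:R * d * Ne%:R) in
     uniform_prob (@mpi2_lt_pi2 R)
       [set phi | eps%:C < CRB Ne L sigma c4 d phi]
     = (if u < 1 then 2 / pi * asin u else 1)%:E).
Proof.
have pi_gt0 := pi_gt0 R.
have modc_gt0 : 0 < modc c4 by rewrite -ltcR -normc_modc normr_gt0.
have Ne_gt1 : 1 < (Ne%:R : R) by rewrite ltr1n.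
have Ne_gt0 : (0 < Ne)%N by apply: leq_trans hNe.
have Ne2_gt1 : 0 < (Ne%:R ^+ 2 - 1 : R) by rewrite subr_gt0 expr_gt1 //; lra.
have L_gt0 : 0 < (L%:R : R) by rewrite ltr0n.
have G_gt0 : 0 < sigma ^+ 2 + modc c4 ^+ 2 * L%:R * d * Ne%:R.
  by rewrite addr_gt0 ?exprn_gt0 // !mulr_gt0 ?exprn_gt0 //; lra.
have K_gt0 : 0 < Fisher_peak Ne L sigma c4 d.
  by rewrite divr_gt0 // !mulr_gt0 ?exprn_gt0 //; lra.
have CRBE phi : CRB Ne L sigma c4 d phi = ((Fisher_peak Ne L sigma c4 d * cos phi ^+ 2)^-1)%:C.
  by rewrite /CRB Fisher_val ?gt_eqF ?ltW // fmorphV.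
split=> [phi phi_itv | eps eps_gt0 u].
  rewrite CRBE /Fisher_peak; congr (_%:C).
  by rewrite -[RHS]invf_div; congr (_^-1); ring.
have u_gt0 : 0 < u by rewrite !mulr_gt0 ?invr_gt0 ?sqrtr_gt0 ?mulr_gt0 ?exprn_gt0 ?ltr0n.
have u2E : u ^+ 2 = (eps * Fisher_peak Ne L sigma c4 d)^-1.
  rewrite /u /Fisher_peak; set m := modc c4 in modc_gt0 G_gt0 *; set p := pi in pi_gt0 *.
  clearbody m p; rewrite !exprMn exprVn !sqr_sqrtr ?ltW ?mulr_gt0 ?exprn_gt0 ?ltr0n //.
  by field; rewrite !gt_eqF ?ltr0n.
rewrite -uniform_prob_cos_lt //; apply: eq_uniform_prob => phi phi_itv.
by rewrite /= CRBE ltcR (ltr_inv_mul_sqr _ _ u_gt0 u2E) // cos_ge0_pihalf.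
Qed.
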